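(* Fix $\mu>-3/2$, $z>0$, and let $u_y$ and $M_y$ be as in the context. Then as $y\downarrow0$, $$u_y=\frac{\log(y)^2}{4y^2}\left[1-\frac{2\log\log(1/y)}{\log(y)}+\frac{\log(z^2)}{\log(y)}+o\!\left(\frac{1}{\log(y)}\right)\right],$$ and $$M_y=\frac{y^3}{\log(y)^2}\left[1+\mathcal{O}\!\left(\frac{\log|\log(y)|}{\log(y)}\right)\right].$$
   Context: For $y>0$, $u_y$ denotes the largest positive solution $u$ of $2\mu-1+4uy+2\log(z/2)\sqrt{u}-\sqrt{u}\log(u)=0$; $\alpha:=1+\log(z)-\log(2)$; and $M_y:=\frac{\log(u_y)}{16u_y^{3/2}}-\frac{\alpha}{8u_y^{3/2}}+\frac{1-2\mu}{8u_y^2}$. *)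

From Stdlib Require Import Reals.
Open Scope R_scope.

Definition Fu (mu z y u : R) : R :=
  2 * mu - 1 + 4 * u * y + 2 * ln (z / 2) * sqrt u - sqrt u * ln u.

Definition is_largest_pos_root (mu z y u : R) : Prop :=
  0 < u /\ Fu mu z y u = 0 /\
  (forall v : R, 0 < v -> Fu mu z y v = 0 -> v <= u).

Definition alpha (z : R) : R := 1 + ln z - ln 2.

(* M_y as a function of u = u_y *)
Definition M_of (mu z u : R) : R :=
  ln u / (16 * Rpower u (3/2)) - alpha z / (8 * Rpower u (3/2))
  + (1 - 2 * mu) / (8 * u ^ 2).

From Stdlib Require Import Reals Lra Ranalysis5.
Open Scope R_scope.

(* Substituting [t = 2 y sqrt u] and [L = - ln y], the equation [Fu u = 0] becomes
   [(2 mu - 1) y / t + t - L + ln z - ln t = 0], up to the positive factor [t / y].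
   For [L] large the left-hand side is negative at [t = L] and positive for [t >= 2 L],
   so by the intermediate value theorem the largest root satisfies [L <= t <= 2 L],
   and the equation itself then gives [t - L = O(ln L)].  Both expansions are explicit
   in [t], [L] and [y], with errors [O((ln L)^2 / L^2)] and [O(ln L / L)]. *)

Lemma ln_le_sub1 x : 0 < x -> ln x <= x - 1.
Proof. intros hx. pose proof (exp_ineq1_le (ln x)) as h. rewrite exp_ln in h; lra. Qed.

Lemma ln_le_ln x y : 0 < x <= y -> ln x <= ln y.
Proof.
  intros [hx hxy]. destruct (Req_dec x y) as [<-|hne]; [lra|].
  left; apply ln_increasing; lra.
Qed.

Lemma ln_sub_bounds L t : 0 < L <= t -> 0 <= ln t - ln L <= (t - L) / L.
Proof.
  intros hLt.
  assert (hq : ln t - ln L = ln (t / L)).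
  { unfold Rdiv. rewrite ln_mult, ln_Rinv; try apply Rinv_0_lt_compat; lra. }
  assert (h1 : 1 <= t / L).
  { apply Rmult_le_reg_r with L; [lra|]. unfold Rdiv. rewrite Rmult_assoc, Rinv_l; lra. }
  rewrite hq. split.
  - rewrite <- ln_1. apply ln_le_ln. lra.
  - replace ((t - L) / L) with (t / L - 1) by (field; lra). apply ln_le_sub1. lra.
Qed.

Lemma Rabs_mul_div_le c y t : 0 <= y <= 1 -> 0 < t -> Rabs (c * y / t) <= Rabs c / t.
Proof.
  intros hy ht. unfold Rdiv. rewrite !Rabs_mult, Rabs_inv, (Rabs_right y), (Rabs_right t) by lra.
  pose proof (Rabs_pos c). pose proof (Rinv_0_lt_compat t ht).
  apply Rmult_le_compat_r; nra.
Qed.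

Lemma Rabs_bounds x : - Rabs x <= x <= Rabs x.
Proof. pose proof (Rle_abs x). pose proof (Rle_abs (- x)). rewrite Rabs_Ropp in *. lra. Qed.

Lemma ln_add_sq_le K L : 0 <= K -> 1 <= L -> (ln L + K) ^ 2 <= (4 + K) ^ 2 * sqrt L.
Proof.
  intros hK hL.
  set (r := sqrt (sqrt L)).
  assert (hr2 : r ^ 2 = sqrt L) by (unfold r; rewrite pow2_sqrt; [|apply sqrt_pos]; reflexivity).
  assert (hr4 : r ^ 4 = L).
  { replace (r ^ 4) with ((r ^ 2) ^ 2) by ring. rewrite hr2, pow2_sqrt; lra. }
  assert (hr1 : 1 <= r).
  { unfold r. rewrite <- sqrt_1. apply sqrt_le_1_alt. rewrite <- sqrt_1. apply sqrt_le_1_alt. lra. }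
  assert (hlnL : ln L = 4 * ln r) by (rewrite <- hr4, ln_pow by lra; simpl; ring).
  assert (hlnr : 0 <= ln r <= r - 1).
  { split; [rewrite <- ln_1; apply ln_le_ln; lra | apply ln_le_sub1; lra]. }
  rewrite <- hr2. replace ((4 + K) ^ 2 * r ^ 2) with (((4 + K) * r) ^ 2) by ring.
  apply pow_incr. nra.
Qed.

Lemma ln_add_sq_div_eventually_le K eps : 0 <= K -> 0 < eps ->
  exists L0, 1 <= L0 /\ forall L, L0 <= L -> (ln L + K) ^ 2 / L <= eps.
Proof.
  intros hK heps.
  set (a := (4 + K) ^ 2 / eps).
  assert (ha : 0 <= a) by (apply Rlt_le, Rdiv_lt_0_compat; nra).
  exists (Rmax 1 (a ^ 2)). split; [apply Rmax_l|]. intros L hL.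
  assert (hL1 : 1 <= L) by (eapply Rle_trans; [apply Rmax_l|exact hL]).
  assert (hsqrt : a <= sqrt L).
  { rewrite <- (sqrt_pow2 a ha). apply sqrt_le_1_alt. eapply Rle_trans; [apply Rmax_r|exact hL]. }
  assert (hs : 1 <= sqrt L) by (rewrite <- sqrt_1; apply sqrt_le_1_alt; lra).
  assert (hsL : sqrt L * sqrt L = L) by (apply sqrt_sqrt; lra).
  apply Rmult_le_reg_r with L; [lra|]. unfold Rdiv. rewrite Rmult_assoc, Rinv_l, Rmult_1_r by lra.
  eapply Rle_trans; [apply ln_add_sq_le; lra|].
  assert (hae : (4 + K) ^ 2 = a * eps) by (unfold a; field; lra).
  rewrite hae.
  assert (h : a * sqrt L <= L) by nra.
  apply Rmult_le_compat_l with (r := eps) in h; lra.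
Qed.

Lemma small_y_large_log L0 : 0 <= L0 ->
  exists d, 0 < d /\ forall y, 0 < y < d -> y < 1 /\ L0 < - ln y.
Proof.
  intros hL0. exists (exp (- L0)). split; [apply exp_pos|]. intros y [hy hyd].
  assert (hln : ln y < - L0) by (rewrite <- (ln_exp (- L0)); apply ln_increasing; lra).
  split; [|lra].
  apply ln_lt_inv; [lra|lra|]. rewrite ln_1. lra.
Qed.

Definition Ft (mu z y t : R) : R :=
  (2 * mu - 1) * y / t + t + ln z - ln t + ln y.

Definition lower_order_bound (mu z : R) : R := 1 + Rabs (ln z) + Rabs (2 * mu - 1).

Lemma Fu_scaled mu z y t : 0 < z -> 0 < y -> 0 < t ->
  Fu mu z y ((t / (2 * y)) ^ 2) = t / y * Ft mu z y t.
Proof.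
  intros hz hy ht.
  assert (hs : 0 < t / (2 * y)) by (apply Rdiv_lt_0_compat; lra).
  assert (hln : ln (t / (2 * y)) = ln t - ln 2 - ln y).
  { unfold Rdiv. rewrite ln_mult, ln_Rinv, ln_mult; try lra.
    apply Rinv_0_lt_compat; lra. }
  unfold Fu, Ft. rewrite sqrt_pow2, ln_pow, hln by lra.
  assert (hz2 : ln (z / 2) = ln z - ln 2).
  { unfold Rdiv. rewrite ln_mult, ln_Rinv; try apply Rinv_0_lt_compat; lra. }
  rewrite hz2. simpl. field. lra.
Qed.

Lemma Ft_continuity_pt mu z y t : 0 < t -> continuity_pt (Ft mu z y) t.
Proof.
  intros ht. apply derivable_continuous_pt. unfold Ft.
  repeat apply derivable_pt_plus.
  - apply derivable_pt_div; [apply derivable_pt_const | apply derivable_pt_id | lra].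
  - apply derivable_pt_id.
  - apply derivable_pt_const.
  - apply derivable_pt_opp. exists (/ t). apply derivable_pt_lim_ln. exact ht.
  - apply derivable_pt_const.
Qed.

Lemma lower_order_bound_ge1 mu z : 1 <= lower_order_bound mu z.
Proof.
  unfold lower_order_bound. pose proof (Rabs_pos (ln z)). pose proof (Rabs_pos (2 * mu - 1)). lra.
Qed.

Section ScaledRoot.

Variables mu z y L : R.
Let c := 2 * mu - 1.
Let K := lower_order_bound mu z.
Hypotheses (hz : 0 < z) (hy : 0 < y < 1) (hL : ln y = - L)
  (hKL : K <= ln L) (hLK : ln L + K < L).

Let L_gt1 : 1 < L.
Proof.
  pose proof (lower_order_bound_ge1 mu z) as hK. fold K in hK.
  assert (hlny : ln y < 0) by (rewrite <- ln_1; apply ln_increasing; lra).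
  apply ln_lt_inv; [lra|lra|]. rewrite ln_1. lra.
Qed.

Let ln2_le1 : ln 2 <= 1.
Proof. pose proof (ln_le_sub1 2). lra. Qed.

Let K_split : Rabs c + Rabs (ln z) + 1 = K.
Proof. unfold K, lower_order_bound, c. ring. Qed.

Let cy_bound t : 1 <= t -> Rabs (c * y / t) <= Rabs c.
Proof.
  intros ht. eapply Rle_trans; [apply Rabs_mul_div_le; lra|].
  pose proof (Rabs_pos c). unfold Rdiv. rewrite <- (Rmult_1_r (Rabs c)) at 2.
  apply Rmult_le_compat_l; [lra|]. rewrite <- Rinv_1. apply Rinv_le_contravar; lra.
Qed.

Lemma Ft_at_lower_neg : Ft mu z y L < 0.
Proof.
  unfold Ft. fold c. rewrite hL.
  pose proof (cy_bound L ltac:(lra)). pose proof (Rabs_bounds (c * y / L)).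
  pose proof (Rabs_bounds (ln z)). lra.
Qed.

Lemma Ft_pos_beyond t : 2 * L <= t -> 0 < Ft mu z y t.
Proof.
  intros ht. unfold Ft. fold c. rewrite hL.
  assert (hln : ln t <= ln 2 + ln L + (t - 2 * L)).
  { rewrite <- ln_mult by lra. pose proof (ln_sub_bounds (2 * L) t ltac:(lra)).
    assert ((t - 2 * L) / (2 * L) <= t - 2 * L).
    { unfold Rdiv. rewrite <- (Rmult_1_r (t - 2 * L)) at 2. apply Rmult_le_compat_l; [lra|].
      rewrite <- Rinv_1. apply Rinv_le_contravar; lra. }
    lra. }
  pose proof (cy_bound t ltac:(lra)). pose proof (Rabs_bounds (c * y / t)).
  pose proof (Rabs_bounds (ln z)). lra.
Qed.

Lemma Ft_root_between : exists t, L <= t <= 2 * L /\ Ft mu z y t = 0.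
Proof.
  destruct (IVT_interv (Ft mu z y) L (2 * L)) as [t [ht hFt]].
  - intros t ht. apply Ft_continuity_pt. lra.
  - lra.
  - exact Ft_at_lower_neg.
  - apply Ft_pos_beyond. lra.
  - exists t. auto.
Qed.

Lemma largest_root_scaled u : is_largest_pos_root mu z y u ->
  exists t, u = (t / (2 * y)) ^ 2 /\ L <= t <= 2 * L /\ Ft mu z y t = 0.
Proof.
  intros [hu [hFu hmax]].
  set (t := 2 * y * sqrt u).
  assert (hsu : 0 < sqrt u) by (apply sqrt_lt_R0; lra).
  assert (ht : 0 < t) by (unfold t; nra).
  assert (hut : u = (t / (2 * y)) ^ 2).
  { replace (t / (2 * y)) with (sqrt u) by (unfold t; field; lra). rewrite pow2_sqrt; lra. }
  assert (hFt : Ft mu z y t = 0).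
  { rewrite hut, Fu_scaled in hFu by lra.
    apply Rmult_integral in hFu as [h|h]; [|exact h].
    assert (0 < t / y) by (apply Rdiv_lt_0_compat; lra). lra. }
  exists t. repeat split; [exact hut| | |exact hFt].
  - destruct Ft_root_between as [t0 [ht0 hFt0]].
    assert (hs0 : 0 < t0 / (2 * y)) by (apply Rdiv_lt_0_compat; lra).
    assert (hle : (t0 / (2 * y)) ^ 2 <= u).
    { apply hmax; [apply pow_lt; lra|]. rewrite Fu_scaled, hFt0 by lra. ring. }
    rewrite hut in hle.
    assert (0 < t / (2 * y)) by (apply Rdiv_lt_0_compat; lra).
    assert (hdiv : t0 / (2 * y) <= t / (2 * y)) by nra.
    apply Rle_trans with t0; [lra|].
    apply Rmult_le_reg_r with (/ (2 * y)); [apply Rinv_0_lt_compat; lra|]. exact hdiv.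
  - destruct (Rle_or_lt t (2 * L)) as [h|h]; [exact h|].
    pose proof (Ft_pos_beyond t ltac:(lra)). lra.
Qed.

Lemma root_excess_le t : L <= t <= 2 * L -> Ft mu z y t = 0 -> t - L <= ln L + K.
Proof.
  intros ht hFt. unfold Ft in hFt. fold c in hFt. rewrite hL in hFt.
  assert (ln t <= ln 2 + ln L) by (rewrite <- ln_mult by lra; apply ln_le_ln; lra).
  pose proof (cy_bound t ltac:(lra)). pose proof (Rabs_bounds (c * y / t)).
  pose proof (Rabs_bounds (ln z)). lra.
Qed.

End ScaledRoot.

Lemma Rpower_sq_3_2 s : 0 < s -> Rpower (s ^ 2) (3 / 2) = s ^ 3.
Proof.
  intros hs. unfold Rpower. rewrite ln_pow by lra.
  replace (3 / 2 * (INR 2 * ln s)) with (INR 3 * ln s) by (simpl; field).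
  rewrite <- ln_pow by lra. apply exp_ln. apply pow_lt; lra.
Qed.

Section RootExpansion.

Variables mu z y L t : R.
Hypotheses (hz : 0 < z) (hy : 0 < y) (hL : ln y = - L) (hL0 : 0 < L) (ht : 0 < t)
  (hFt : Ft mu z y t = 0).

Let ln_z_at_root : ln z = ln t + L - t - (2 * mu - 1) * y / t.
Proof. unfold Ft in hFt. lra. Qed.

Lemma u_expansion_at_root :
  (t / (2 * y)) ^ 2 * (4 * y ^ 2) / ln y ^ 2 - 1
    + 2 * ln (ln (/ y)) / ln y - ln (z ^ 2) / ln y
  = ((t - L) ^ 2 / L + 2 * (ln t - ln L) - 2 * ((2 * mu - 1) * y / t)) / L.
Proof.
  rewrite ln_Rinv, hL, Ropp_involutive, ln_pow, ln_z_at_root by lra.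
  simpl. field. lra.
Qed.

Lemma M_expansion_at_root :
  M_of mu z ((t / (2 * y)) ^ 2) * ln y ^ 2 / y ^ 3
  = L ^ 2 / t ^ 2 - L ^ 2 / t ^ 3 - (2 * mu - 1) * y * L ^ 2 / t ^ 4.
Proof.
  assert (hs : 0 < t / (2 * y)) by (apply Rdiv_lt_0_compat; lra).
  assert (hlns : ln (t / (2 * y)) = ln t - ln 2 + L).
  { unfold Rdiv. rewrite ln_mult, ln_Rinv, ln_mult, hL; try lra. apply Rinv_0_lt_compat; lra. }
  unfold M_of, alpha. rewrite Rpower_sq_3_2, ln_pow, hlns, ln_z_at_root, hL by lra.
  simpl. field. lra.
Qed.

End RootExpansion.

Lemma u_error_le L t y c K :
  1 <= L <= t -> t - L <= ln L + K -> 0 <= y <= 1 -> Rabs c <= K -> 1 <= K ->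
  Rabs ((t - L) ^ 2 / L + 2 * (ln t - ln L) - 2 * (c * y / t)) <= 5 * (ln L + K) ^ 2 / L.
Proof.
  intros hLt hw hy hc hK.
  set (m := ln L + K) in *.
  assert (hlnL : 0 <= ln L) by (rewrite <- ln_1; apply ln_le_ln; lra).
  assert (hKm : K <= m) by (unfold m; lra).
  assert (hiL : 0 < / L) by (apply Rinv_0_lt_compat; lra).
  assert (hsq : (t - L) ^ 2 / L <= m ^ 2 / L).
  { unfold Rdiv. apply Rmult_le_compat_r; [lra|]. apply pow_incr. lra. }
  pose proof (ln_sub_bounds L t ltac:(lra)) as hlog.
  assert (hcy : Rabs (c * y / t) <= K / L).
  { eapply Rle_trans; [apply Rabs_mul_div_le; lra|].
    unfold Rdiv. apply Rmult_le_compat; [apply Rabs_pos | left; apply Rinv_0_lt_compat; lra | lra |].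
    apply Rinv_le_contravar; lra. }
  assert (hsum : m ^ 2 / L + 2 * ((t - L) / L) + 2 * (K / L) <= 5 * m ^ 2 / L).
  { unfold Rdiv.
    replace (m ^ 2 * / L + 2 * ((t - L) * / L) + 2 * (K * / L))
      with ((m ^ 2 + 2 * (t - L) + 2 * K) * / L) by ring.
    apply Rmult_le_compat_r; nra. }
  pose proof (Rabs_bounds (c * y / t)).
  assert (0 <= (t - L) ^ 2 / L) by (unfold Rdiv; apply Rmult_le_pos; [apply pow2_ge_0|lra]).
  apply Rabs_le. lra.
Qed.

Lemma M_error_le L t y c K :
  1 <= L <= t -> t - L <= ln L + K -> 0 <= y <= 1 -> Rabs c <= K -> 1 <= ln L ->
  Rabs (L ^ 2 / t ^ 2 - L ^ 2 / t ^ 3 - c * y * L ^ 2 / t ^ 4 - 1) <= (3 + 3 * K) * (ln L / L).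
Proof.
  intros hLt hw hy hc hlnL.
  set (q := L / t).
  assert (hq : 0 < q <= 1).
  { unfold q. split; [apply Rdiv_lt_0_compat; lra|].
    apply Rmult_le_reg_r with t; [lra|]. unfold Rdiv. rewrite Rmult_assoc, Rinv_l; lra. }
  assert (hiL : 0 < / L) by (apply Rinv_0_lt_compat; lra).
  assert (hit : 0 < / t <= / L) by (split; [apply Rinv_0_lt_compat | apply Rinv_le_contravar]; lra).
  assert (hit2 : 0 < / t ^ 2 <= / L)
    by (split; [apply Rinv_0_lt_compat, pow_lt | apply Rinv_le_contravar]; nra).
  replace (L ^ 2 / t ^ 2 - L ^ 2 / t ^ 3 - c * y * L ^ 2 / t ^ 4 - 1)
    with (- (1 - q ^ 2) - q ^ 2 * / t - c * (y * q ^ 2 * / t ^ 2)) by (unfold q; field; lra).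
  (* [1 - q^2 <= 2 (1 - q)] and [1 - q = (t - L) / t] *)
  assert (hmain : 0 <= 1 - q ^ 2 <= 2 * (t - L) * / L).
  { assert (1 - q = (t - L) * / t) by (unfold q; field; lra).
    assert ((t - L) * / t <= (t - L) * / L) by (apply Rmult_le_compat_l; lra). nra. }
  assert (hsecond : 0 <= q ^ 2 * / t <= / L) by (split; nra).
  assert (hthird : Rabs (c * (y * q ^ 2 * / t ^ 2)) <= K * / L).
  { assert (0 <= y * q ^ 2 <= 1) by (split; nra).
    rewrite Rabs_mult, (Rabs_right (y * q ^ 2 * / t ^ 2)) by nra.
    apply Rmult_le_compat; [apply Rabs_pos | nra | lra | nra]. }
  pose proof (Rabs_bounds (c * (y * q ^ 2 * / t ^ 2))).
  pose proof (Rabs_pos c).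
  assert (hfin : 2 * (t - L) * / L + / L + K * / L <= (3 + 3 * K) * (ln L / L)).
  { unfold Rdiv.
    replace (2 * (t - L) * / L + / L + K * / L) with ((2 * (t - L) + 1 + K) * / L) by ring.
    rewrite <- Rmult_assoc. apply Rmult_le_compat_r; nra. }
  apply Rabs_le. lra.
Qed.

Lemma eventually_scaled_root mu z (u : R -> R) d0 eps :
  0 < z -> 0 < d0 -> (forall y, 0 < y < d0 -> is_largest_pos_root mu z y (u y)) -> 0 < eps ->
  exists d, 0 < d /\ forall y, 0 < y < d -> exists t L,
    ln y = - L /\ u y = (t / (2 * y)) ^ 2 /\ Ft mu z y t = 0 /\ 0 < y < 1 /\
    1 <= L <= t /\ t - L <= ln L + lower_order_bound mu z /\ 1 <= ln L /\
    (ln L + lower_order_bound mu z) ^ 2 / L <= eps.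
Proof.
  intros hz hd0 hroot heps.
  set (K := lower_order_bound mu z).
  pose proof (lower_order_bound_ge1 mu z) as hK. fold K in hK.
  destruct (ln_add_sq_div_eventually_le K (Rmin 1 eps)) as [L0 [hL0 HL0]];
    [lra | apply Rmin_pos; lra |].
  destruct (small_y_large_log (Rmax L0 (exp K))) as [d [hd Hd]];
    [eapply Rle_trans; [|apply Rmax_l]; lra |].
  exists (Rmin d0 d). split; [apply Rmin_pos; lra|]. intros y [hy hyd].
  destruct (Hd y) as [hy1 hLbig]; [split; [lra | eapply Rlt_le_trans; [exact hyd | apply Rmin_r]]|].
  set (L := - ln y) in *.
  pose proof (Rmax_l L0 (exp K)). pose proof (Rmax_r L0 (exp K)).
  assert (hKL : K <= ln L) by (rewrite <- (ln_exp K); apply ln_le_ln; pose proof (exp_pos K); lra).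
  assert (hsmall : (ln L + K) ^ 2 / L <= Rmin 1 eps) by (apply HL0; lra).
  assert (hLK : ln L + K < L).
  { pose proof (Rmin_l 1 eps).
    assert (h : (ln L + K) ^ 2 <= L).
    { apply Rmult_le_reg_r with (/ L); [apply Rinv_0_lt_compat; lra|].
      rewrite Rinv_r by lra. unfold Rdiv in hsmall. lra. }
    pose proof (exp_ineq1_le K).
    destruct (Rlt_or_le (ln L + K) L) as [hlt|hge]; [exact hlt|].
    assert (L * L <= (ln L + K) ^ 2) by (simpl; rewrite Rmult_1_r; apply Rmult_le_compat; lra).
    assert (L * 1 < L * L) by (apply Rmult_lt_compat_l; lra). lra. }
  destruct (largest_root_scaled mu z y L hz ltac:(lra) ltac:(unfold L; ring) hKL hLK (u y))
    as [t [hut [ht hFt]]].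
  { apply hroot. split; [lra | eapply Rlt_le_trans; [exact hyd | apply Rmin_l]]. }
  pose proof (root_excess_le mu z y L ltac:(lra) ltac:(unfold L; ring) hKL hLK t ht hFt) as hw.
  fold K in hw.
  pose proof (Rmin_r 1 eps).
  exists t, L. repeat split; try lra. unfold L. ring.
Qed.

Theorem mainTheorem3 (mu z : R) (hmu : -3/2 < mu) (hz : 0 < z)
  (u : R -> R)
  (hu : exists d : R, 0 < d /\
        forall y : R, 0 < y < d -> is_largest_pos_root mu z y (u y)) :
  (forall eps : R, 0 < eps -> exists d : R, 0 < d /\
     forall y : R, 0 < y < d ->
       Rabs (u y * (4 * y ^ 2) / (ln y) ^ 2 - 1
             + 2 * ln (ln (/ y)) / ln y - ln (z ^ 2) / ln y)
       <= eps * Rabs (/ ln y)) /\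
  (exists C d : R, 0 < d /\
     forall y : R, 0 < y < d ->
       Rabs (M_of mu z (u y) * (ln y) ^ 2 / y ^ 3 - 1)
       <= C * Rabs (ln (Rabs (ln y)) / ln y)).
Proof.
  destruct hu as [d0 [hd0 hroot]].
  set (K := lower_order_bound mu z).
  assert (hcK : Rabs (2 * mu - 1) <= K)
    by (unfold K, lower_order_bound; pose proof (Rabs_pos (ln z)); lra).
  pose proof (lower_order_bound_ge1 mu z) as hK. fold K in hK.
  split.
  - intros eps heps.
    destruct (eventually_scaled_root mu z u d0 (eps / 5) hz hd0 hroot ltac:(lra)) as [d [hd Hd]].
    exists d. split; [exact hd|]. intros y hy.
    destruct (Hd y hy) as (t & L & hL & -> & hFt & hy01 & hLt & hw & hlnL & hsmall).
    fold K in hw, hsmall.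
    rewrite (u_expansion_at_root mu z y L t), hL, Rabs_inv, Rabs_Ropp, (Rabs_right L) by lra.
    unfold Rdiv at 1. rewrite Rabs_mult, Rabs_inv, (Rabs_right L) by lra.
    apply Rmult_le_compat_r; [left; apply Rinv_0_lt_compat; lra|].
    eapply Rle_trans; [apply u_error_le with (K := K); lra|].
    unfold Rdiv in *. lra.
  - destruct (eventually_scaled_root mu z u d0 1 hz hd0 hroot ltac:(lra)) as [d [hd Hd]].
    exists (3 + 3 * K), d. split; [exact hd|]. intros y hy.
    destruct (Hd y hy) as (t & L & hL & -> & hFt & hy01 & hLt & hw & hlnL & _).
    fold K in hw.
    rewrite (M_expansion_at_root mu z y L t), hL, Rabs_Ropp, (Rabs_right L) by lra.
    replace (ln L / - L) with (- (ln L / L)) by (field; lra).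
    assert (hpos : 0 < ln L / L) by (apply Rdiv_lt_0_compat; lra).
    rewrite Rabs_Ropp, (Rabs_right (ln L / L)) by lra.
    apply M_error_le; lra.
Qed.
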